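(* Let $K\subseteq L$ be differential fields, $r\in\mathbb{N}$, and suppose $K$ is not algebraically closed, the constant field $C$ of $K$ is not all of $K$, and $K$ is weakly $r$-differentially closed in $L$. Let $m\ge1$ and let $Q_1,\dots,Q_m\in K\{Y\}$ be nonzero differential polynomials of order $\le r$ having a common zero in $L$. Then $Q_1,\dots,Q_m$ have a common zero in $K$.
   Context: Differential fields have characteristic $0$. $K$ is weakly $r$-differentially closed in $L$ if every nonzero $P\in K\{Y\}$ of order $\le r$ having a zero in $L$ has a zero in $K$. *)

From HB Require Import structures.
From mathcomp Require Import all_boot all_order all_algebra.
From mathcomp Require Import mpoly.
Set Implicit Arguments. Unset Strict Implicit. Unset Printing Implicit Defensive.
Import GRing.Theory.
Local Open Scope ring_scope.

Definition is_derivation (F : nzRingType) (D : F -> F) : Prop :=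
  (forall x y, D (x + y) = D x + D y) /\
  (forall x y, D (x * y) = D x * y + x * D y).

(* Differential polynomials in one indeterminate Y of order <= r over K are
   ordinary polynomials in the r+1 variables Y, Y', ..., Y^(r):
   {mpoly K[r.+1]}, variable i standing for Y^(i). *)

Definition dvec (F : nzRingType) (D : F -> F) (r : nat) (y : F) : 'I_r.+1 -> F :=
  fun i => iter i D y.
Arguments dvec {F} D r y _.

Definition deval (F : nzRingType) (D : F -> F) (r : nat)
  (P : {mpoly F[r.+1]}) (y : F) : F := P.@[dvec D r y].
Arguments deval {F} D {r} P y.

Definition weakly_r_diff_closed (K L : fieldType) (dK : K -> K) (dL : L -> L)
  (f : {rmorphism K -> L}) (r : nat) : Prop :=
  forall P : {mpoly K[r.+1]}, P != 0 ->
    (exists y : L, deval dL (map_mpoly f P) y = 0) ->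
    exists x : K, deval dK P x = 0.

Definition alg_closed (K : fieldType) : Prop :=
  forall p : {poly K}, (1 < size p)%N -> exists x, root p x.

(* A polynomial p of degree d > 0 without roots in K gives the binary form
   H(a, b) = b^d p(a/b), whose only zero in K^2 is (0, 0).  Hence
   R := H(P, Q) vanishes at x in K exactly where P and Q both do, while it
   still vanishes at every common zero of P and Q in L; and R is nonzero,
   because its coefficient at the larger of the leading monomials of P^d and
   Q^d is a value of H at a pair of elements of K that is not (0, 0).
   Iterating, the family Q_1, ..., Q_m is replaced by one nonzero R with the
   same zeros in K and at least the same zeros in L, and weak r-differential
   closedness applies to R. *)
From HB Require Import structures.
From mathcomp Require Import all_boot all_order all_algebra.
From mathcomp Require Import mpoly ring.
From Stdlib Require Import Classical.
Import Order.TTheory GRing.Theory.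

Set Implicit Arguments.
Unset Strict Implicit.
Unset Printing Implicit Defensive.
Local Open Scope ring_scope.

Definition hform (R : comNzRingType) (d : nat) (c : nat -> R) (a b : R) : R :=
  \sum_(j < d.+1) c j * a ^+ j * b ^+ (d - j).

Definition anisotropic (R : comNzRingType) (d : nat) (c : nat -> R) : Prop :=
  forall a b : R, hform d c a b = 0 -> a = 0 /\ b = 0.

Section HomogeneousForm.
Variables (R : comNzRingType) (d : nat) (c : nat -> R).

Lemma eq_hform c' a b : c =1 c' -> hform d c a b = hform d c' a b.
Proof. by move=> eq_c; apply: eq_bigr => j _; rewrite eq_c. Qed.

Lemma hform_rev a b : hform d c a b = hform d (fun j => c (d - j)) b a.
Proof.
rewrite /hform (reindex_inj rev_ord_inj) /=; apply: eq_bigr => j _.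
by rewrite subSS -!mulrA [b ^+ j * _]mulrC subKn ?leq_ord.
Qed.

Lemma hform_b0 a : hform d c a 0 = c d * a ^+ d.
Proof.
rewrite /hform big_ord_recr /= subnn expr0 mulr1 big1 ?add0r // => j _.
by rewrite expr0n subn_eq0 leqNgt ltn_ord mulr0.
Qed.

Lemma hform_a0 b : hform d c 0 b = c 0 * b ^+ d.
Proof.
rewrite /hform big_ord_recl /= expr0 mulr1 subn0 big1 ?addr0 // => j _.
by rewrite expr0n mulr0 mul0r.
Qed.

Lemma hform00 : (0 < d)%N -> hform d c 0 0 = 0.
Proof. by move=> d_gt0; rewrite hform_a0 expr0n gtn_eqF // mulr0. Qed.

Lemma rmorph_hform (S : comNzRingType) (g : {rmorphism R -> S}) a b :
  g (hform d c a b) = hform d (g \o c) (g a) (g b).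
Proof. by rewrite rmorph_sum; apply: eq_bigr => j _; rewrite !rmorphM !rmorphXn. Qed.

Lemma anisotropic_rev : anisotropic d c -> anisotropic d (fun j => c (d - j)).
Proof. by move=> Hc a b; rewrite -hform_rev => /Hc[-> ->]. Qed.

End HomogeneousForm.

Lemma hform_horner (K : fieldType) (p : {poly K}) a b : b != 0 ->
  hform (size p).-1 (nth 0 p) a b = b ^+ (size p).-1 * p.[a / b].
Proof.
move=> b0; have [->|p0] := eqVneq p 0.
  by rewrite /hform size_poly0 big_ord1 horner0 mulr0 polyseq0 nth_nil !mul0r.
have size_p : size p = (size p).-1.+1 by rewrite prednK // size_poly_gt0.
rewrite /hform -size_p horner_coef mulr_sumr; apply: eq_bigr => j _.
have le_j : (j <= (size p).-1)%N by rewrite -ltnS -size_p.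
rewrite -{2}(subnK le_j) exprD expr_div_n.
by field; rewrite expf_neq0.
Qed.

Lemma rootless_anisotropic (K : fieldType) (p : {poly K}) :
  (1 < size p)%N -> (forall x, ~~ root p x) ->
  anisotropic (size p).-1 (nth 0 p).
Proof.
move=> size_p rootless a b; have [-> | b0] := eqVneq b 0.
  have p0 : p != 0 by rewrite -size_poly_gt0 (ltn_trans _ size_p).
  have d_gt0 : (0 < (size p).-1)%N by rewrite -ltnS prednK ?size_p ?size_poly_gt0.
  rewrite hform_b0 -lead_coefE => /eqP.
  by rewrite mulf_eq0 lead_coef_eq0 (negbTE p0) expf_eq0 d_gt0 => /eqP.
rewrite hform_horner // => /eqP; rewrite mulf_eq0 expf_eq0 (negbTE b0) andbF /=.
by rewrite -/(root p _) (negbTE (rootless _)).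
Qed.

Section LeadingMonomials.
Variables (n : nat) (R : idomainType).

Lemma mulmnDr (m : 'X_{1..n}) j k : (m *+ (j + k) = m *+ j + m *+ k)%MM.
Proof. by apply/mnmP => i; rewrite mnmDE !mulmnE mulnDr. Qed.

Lemma ltm_mulmn2r (m1 m2 : 'X_{1..n}) j :
  (m1 < m2)%O -> (0 < j)%N -> ((m1 *+ j)%MM < (m2 *+ j)%MM)%O.
Proof.
move=> lt_m; elim: j => // -[|j] IH _; first by rewrite !mulm1n.
by rewrite !(mulmS _ j.+1); apply: ltm_add => //; apply: IH.
Qed.

(* mlead Q *+ d bounds the leading monomial of every P^j Q^(d-j); for j > 0
   it is reached only when mlead P = mlead Q. *)
Lemma mcoeff_XM_lead (P Q : {mpoly R[n]}) d j : P != 0 -> Q != 0 ->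
  (mlead P <= mlead Q)%O -> (j <= d)%N ->
  (P ^+ j * Q ^+ (d - j))@_(mlead Q *+ d)%MM
    = (if mlead P == mlead Q then mleadc P else 0) ^+ j * mleadc Q ^+ (d - j).
Proof.
move=> P0 Q0 le_PQ le_jd; rewrite -{1}(subnKC le_jd) mulmnDr.
have [eq_PQ | ne_PQ] := eqVneq (mlead P) (mlead Q).
  rewrite -{1}eq_PQ -(mleadX _ P0) -(mleadX _ Q0).
  by rewrite mleadcM !mleadX // !mleadcX.
have [-> | j_gt0] := posnP j; first by rewrite !expr0 !mul1r subn0 mulm0n add0m mleadcX.
rewrite expr0n gtn_eqF // mul0r mcoeff_gt_mlead // mleadM ?expf_neq0 // !mleadX //.
by apply: ltmc_le_add; [apply: ltm_mulmn2r; rewrite // lt_neqAle ne_PQ | ].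
Qed.

Lemma hformC_neq0 d (c : nat -> R) (P Q : {mpoly R[n]}) :
  anisotropic d c -> P != 0 -> Q != 0 -> hform d (fun j => (c j)%:MP) P Q != 0.
Proof.
move=> Hc P0 Q0; wlog le_PQ : c P Q Hc P0 Q0 / (mlead P <= mlead Q)%O.
  move=> hwlog; have [le_PQ | lt_QP] := leP (mlead P) (mlead Q); first exact: hwlog.
  by rewrite hform_rev; apply: hwlog (ltW lt_QP) => //; apply: anisotropic_rev.
apply/eqP => /(congr1 (mcoeff (mlead Q *+ d)%MM)); rewrite mcoeff0 raddf_sum /=.
under eq_bigr => j _ do rewrite -mulrA mcoeffCM mcoeff_XM_lead ?leq_ord // mulrA.
by case/Hc=> _ /eqP; rewrite mleadc_eq0 (negbTE Q0).
Qed.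

End LeadingMonomials.

Section Joins.
Variables (K : fieldType) (n : nat) (p : {poly K}).
Hypotheses (size_p : (1 < size p)%N) (rootless : forall x, ~~ root p x).

Let p_anisotropic : anisotropic (size p).-1 (nth 0 p) :=
  rootless_anisotropic size_p rootless.

Definition form_join (P Q : {mpoly K[n]}) : {mpoly K[n]} :=
  hform (size p).-1 (fun j => (p`_j)%:MP) P Q.

Definition form_joins (P0 : {mpoly K[n]}) (s : seq {mpoly K[n]}) :=
  foldr form_join P0 s.

Lemma form_joins_neq0 P0 s :
  P0 != 0 -> all (fun P => P != 0) s -> form_joins P0 s != 0.
Proof.
move=> P0_neq0; elim: s => //= P s IH /andP[P_neq0 /IH joins_neq0].
exact: hformC_neq0 p_anisotropic P_neq0 joins_neq0.
Qed.

Lemma meval_form_joins_eq0 v P0 s : (form_joins P0 s).@[v] = 0 ->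
  forall P, P \in P0 :: s -> P.@[v] = 0.
Proof.
elim: s => [|Q s IH] /= joins_v P; first by rewrite inE => /eqP ->.
move: joins_v; rewrite rmorph_hform.
rewrite (@eq_hform _ _ _ (nth 0 p)) => [|j]; last exact: mevalC.
case/p_anisotropic => Qv /IH IHv.
rewrite !inE => /or3P[/eqP -> | /eqP -> // | s_P]; apply: IHv.
  exact: mem_head.
by rewrite inE s_P orbT.
Qed.

Lemma rmorph_form_joins_eq0 (S : comNzRingType) (g : {rmorphism {mpoly K[n]} -> S})
  P0 s : (forall P, P \in P0 :: s -> g P = 0) -> g (form_joins P0 s) = 0.
Proof.
have d_gt0 : (0 < (size p).-1)%N by rewrite -ltnS prednK // (ltn_trans _ size_p).
elim: s => [|Q s IH] g_eq0; first by apply: g_eq0; rewrite inE.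
rewrite /= -/(form_joins P0 s) rmorph_hform g_eq0 ?IH ?hform00 //.
  by move=> P; rewrite inE => /orP[P0_P | s_P]; apply: g_eq0; rewrite !inE ?P0_P ?s_P ?orbT.
by rewrite !inE eqxx orbT.
Qed.

End Joins.

Theorem mainTheorem18
  (K L : fieldType) (dK : K -> K) (dL : L -> L)
  (hdK : is_derivation dK) (hdL : is_derivation dL)
  (hcharK : [pchar K] =i pred0) (hcharL : [pchar L] =i pred0)
  (f : {rmorphism K -> L}) (hf : forall x, f (dK x) = dL (f x))
  (r : nat)
  (hnac : ~ alg_closed K)
  (hC : exists a : K, dK a != 0)
  (hwc : weakly_r_diff_closed dK dL f r)
  (m : nat) (hm : (0 < m)%N) (Q : 'I_m -> {mpoly K[r.+1]})
  (hQ : forall i, Q i != 0)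
  (hzero : exists y : L, forall i, deval dL (map_mpoly f (Q i)) y = 0) :
  exists x : K, forall i, deval dK (Q i) x = 0.
Proof.
have [p [size_p rootless]] : exists p : {poly K}, (1 < size p)%N /\ forall x, ~~ root p x.
  apply: NNPP => no_p; apply: hnac => p size_p; apply: NNPP => no_root.
  by apply: no_p; exists p; split=> // x; apply/negP => px; apply: no_root; exists x.
case: m hm Q hQ hzero => // m _ Q hQ [y hy].
pose R := form_joins p (Q ord0) [seq Q i | i <- enum 'I_m.+1].
have Q_R i : Q i \in Q ord0 :: [seq Q i | i <- enum 'I_m.+1].
  by rewrite inE map_f ?mem_enum ?orbT.
have [x Rx] : exists x : K, deval dK R x = 0.
  apply: hwc; first by apply: form_joins_neq0 => //; apply/allP => _ /mapP[i _ ->].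
  exists y; have := rmorph_form_joins_eq0 size_p (g := meval (dvec dL r y) \o map_mpoly f).
  apply=> _ /predU1P[-> | /mapP[i _ ->]]; exact: hy.
by exists x => i; apply: (meval_form_joins_eq0 size_p rootless Rx).
Qed.
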